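(* Let $q\in\mathbb{C}$ with $0<|q|<1$ and $l,m,n,u,v\in\mathbb{N}$. Then \[ \frac{1}{(q)_{l+m}(q)_{l+n}(q)_u(q)_v} \sum_{k=0}^\infty\frac{q^{k^2} (q)_{l+m+n-k}(q)_{u+v+k}} {(q)_k (q)_{l-k}(q)_{m-k}(q)_{n-k} (q)_{u+k}(q)_{v+k}} =\frac{1}{(q)_{l+u}(q)_{l+v}(q)_m(q)_n} \sum_{k=0}^\infty\frac{q^{k^2} (q)_{l+u+v-k}(q)_{m+n+k}} {(q)_k (q)_{l-k}(q)_{u-k}(q)_{v-k} (q)_{m+k}(q)_{n+k}}, \] and \[ \frac{1}{(q)_{l+m+1}(q)_{l+n+1}(q)_u(q)_v} \sum_{k=0}^\infty\frac{q^{k^2+k} (q)_{l+m+n-k+1}(q)_{u+v+k+1}} {(q)_k (q)_{l-k}(q)_{m-k}(q)_{n-k} (q)_{u+k+1}(q)_{v+k+1}} =\frac{1}{(q)_{l+u+1}(q)_{l+v+1}(q)_m(q)_n} \sum_{k=0}^\infty\frac{q^{k^2+k} (q)_{l+u+v-k+1}(q)_{m+n+k+1}} {(q)_k (q)_{l-k}(q)_{u-k}(q)_{v-k} (q)_{m+k+1}(q)_{n+k+1}}. \]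
   Context: $(q)_n=(q;q)_n=(1-q)(1-q^2)\cdots(1-q^n)$ for $n\ge0$ (with $(q)_0=1$), and $1/(q)_n=0$ for $n<0$. *)

From mathcomp Require Import all_boot all_order all_algebra.
From mathcomp Require Import complex.
From mathcomp Require Import reals.
Set Implicit Arguments. Unset Strict Implicit. Unset Printing Implicit Defensive.
Import Order.TTheory GRing.Theory Num.Theory.
Local Open Scope ring_scope.

Definition qpoch (F : ringType) (q : F) (n : nat) : F :=
  \prod_(1 <= i < n.+1) (1 - q ^+ i).

(* 1/(q)_n with the convention 1/(q)_n = 0 for n < 0 (n an integer) *)
Definition invqp (F : unitRingType) (q : F) (n : int) : F :=
  match n with
  | Posz m => (qpoch q m)^-1
  | Negz _ => 0
  end.

From mathcomp Require Import all_boot all_order all_algebra.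
From mathcomp Require Import complex reals.
From mathcomp Require Import zify ring.
Set Implicit Arguments. Unset Strict Implicit. Unset Printing Implicit Defensive.
Import Order.TTheory GRing.Theory Num.Theory.
Local Open Scope ring_scope.

(* Only the fact that q is not a root of unity matters.  The q-Pfaff-Saalschutz
   summation over j, proved by induction on p with a Zeilberger (creative
   telescoping) certificate, expands the factor
   (q)_{u+v+k+s} / ((q)_u (q)_v (q)_{u+k+s} (q)_{v+k+s}) of the k-th summand of
   the left-hand side into a sum over j (take p = l - k and a = k + s).  The
   left-hand side thereby becomes a double sum whose summand is symmetric under
   (m, n, k) <-> (u, v, j), and the right-hand side is the same double sum.  The two
   identities are the cases s = 0 and s = 1. *)

Lemma qpoch0 (F : nzRingType) (q : F) : qpoch q 0 = 1.
Proof. by rewrite /qpoch big_geq. Qed.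

Lemma qpochS (F : nzRingType) (q : F) n : qpoch q n.+1 = qpoch q n * (1 - q ^+ n.+1).
Proof. by rewrite /qpoch big_nat_recr. Qed.

Lemma invqp_nat (F : unitRingType) (q : F) (n : nat) : invqp q n = (qpoch q n)^-1.
Proof. by []. Qed.

Lemma invqp_subn_lt0 (F : unitRingType) (q : F) (m n : nat) :
  (m < n)%N -> invqp q (m%:Z - n%:Z) = 0.
Proof.
move=> lt_mn; have : m%:Z - n%:Z < 0 by rewrite subr_lt0 ltz_nat.
by case: (m%:Z - n%:Z).
Qed.

Lemma expr_neq1_norm_lt1 (R : numDomainType) (x : R) n : `|x| < 1 -> x ^+ n.+1 != 1.
Proof.
move=> x_lt1; apply/eqP => xn1.
have : `|x ^+ n.+1| < 1 by rewrite normrX exprn_ilt1.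
by rewrite xn1 normr1 ltxx.
Qed.

Section Terms.
Variables (F : unitRingType) (q : F).

Definition saal_term (a u v p j : nat) : F :=
  q ^+ (j * j + a * j) * qpoch q (u + v + p + a - j) * invqp q (p%:Z - j%:Z)
  * invqp q (a + j)%N * invqp q j * invqp q (u%:Z - j%:Z) * invqp q (v%:Z - j%:Z).

Definition saal_cert (a u v p j : nat) : F :=
  - (q ^+ (p.+1 - j) * (1 - q ^+ j) * (1 - q ^+ (a + j)) * saal_term a u v p.+1 j).

Lemma saal_term_eq0 a u v p j :
  [|| (u < j)%N, (v < j)%N | (p < j)%N] -> saal_term a u v p j = 0.
Proof.
by rewrite /saal_term; case/or3P => lt_j; rewrite (invqp_subn_lt0 q lt_j) !(mulr0, mul0r).
Qed.

Lemma saal_term_succ_eq0 a u v p : saal_term a u v p p.+1 = 0.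
Proof. by rewrite saal_term_eq0 // ltnSn !orbT. Qed.

Definition side_term (s l m n u v k : nat) : F :=
  q ^+ (k * k + s * k) * qpoch q (l + m + n - k + s) * qpoch q (u + v + k + s)
  * invqp q k * invqp q (l%:Z - k%:Z) * invqp q (m%:Z - k%:Z) * invqp q (n%:Z - k%:Z)
  * invqp q (u + k + s)%N * invqp q (v + k + s)%N.

Definition double_term (s l m n u v k j : nat) : F :=
  q ^+ (k * k + j * j + k * j + s * k + s * j)
  * qpoch q (l + m + n - k + s) * qpoch q (l + u + v - j + s)
  * invqp q k * invqp q j * invqp q (k + j + s)%N * invqp q (l%:Z - k%:Z - j%:Z)
  * invqp q (m%:Z - k%:Z) * invqp q (n%:Z - k%:Z)
  * invqp q (u%:Z - j%:Z) * invqp q (v%:Z - j%:Z).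

End Terms.

Lemma double_term_swap (F : comUnitRingType) (q : F) s l m n u v k j :
  double_term q s l u v m n k j = double_term q s l m n u v j k.
Proof.
rewrite /double_term (addnC k j) (_ : l%:Z - k%:Z - j%:Z = l%:Z - j%:Z - k%:Z); last by ring.
rewrite (_ : (k * k + j * j + k * j + s * k + s * j = j * j + k * k + j * k + s * j + s * k)%N);
  last by lia.
ring.
Qed.

Lemma double_term_saal_term (F : comUnitRingType) (q : F) s l m n u v k j :
  (k <= l)%N ->
  double_term q s l m n u v k j =
  q ^+ (k * k + s * k) * qpoch q (l + m + n - k + s) * invqp q k
  * invqp q (m%:Z - k%:Z) * invqp q (n%:Z - k%:Z) * saal_term q (k + s) u v (l - k) j.
Proof.
move=> le_kl; rewrite /double_term /saal_term (subzn le_kl).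
have [le_j|lt_j] := leqP j (l - k); last first.
  by rewrite (invqp_subn_lt0 q lt_j) !(mulr0, mul0r).
rewrite (_ : (u + v + (l - k) + (k + s) - j = l + u + v - j + s)%N); last by lia.
rewrite (_ : (k + s + j = k + j + s)%N); last by lia.
rewrite (_ : (k * k + j * j + k * j + s * k + s * j
            = (k * k + s * k) + (j * j + (k + s) * j))%N); last by lia.
by rewrite exprD; ring.
Qed.

Section QSaalschutz.
Variables (F : fieldType) (q : F).
Hypothesis q_not_root1 : forall n, q ^+ n.+1 != 1.

Lemma subr1X_neq0 n : 1 - q ^+ n.+1 != 0.
Proof. by rewrite subr_eq0 eq_sym. Qed.

Lemma qpoch_neq0 n : qpoch q n != 0.
Proof.
by elim: n => [|n IHn]; rewrite ?qpoch0 ?oner_neq0 // qpochS mulf_neq0 ?subr1X_neq0.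
Qed.

Lemma invqpS (n : nat) : invqp q n = invqp q n.+1 * (1 - q ^+ n.+1).
Proof. by rewrite !invqp_nat qpochS invfM -mulrA mulVf ?mulr1 ?subr1X_neq0. Qed.

Lemma invqp_subnS (n j : nat) :
  invqp q (n%:Z - j.+1%:Z) = invqp q (n%:Z - j%:Z) * (1 - q ^+ (n - j)).
Proof.
case: (ltnP j n) => [lt_jn|le_nj].
  rewrite !subzn ?(ltnW lt_jn) // (_ : (n - j = (n - j.+1).+1)%N); last by lia.
  exact: invqpS.
rewrite invqp_subn_lt0 //; case: (eqVneq n j) => [->|ne_nj].
  by rewrite subnn expr0 (subrr (1 : F)) mulr0.
by rewrite invqp_subn_lt0 ?mul0r // ltn_neqAle ne_nj.
Qed.

Lemma saal_term_recurrence_in a u v p j :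
  (j <= p)%N -> (j <= u)%N -> (j <= v)%N ->
  saal_term q a u v p.+1 j * ((1 - q ^+ (p + a).+1) * (1 - q ^+ p.+1))
  - saal_term q a u v p j * ((1 - q ^+ (u + p + a).+1) * (1 - q ^+ (v + p + a).+1))
  = saal_cert q a u v p j.+1 - saal_cert q a u v p j.
Proof.
move=> le_jp le_ju le_jv; rewrite /saal_cert /saal_term.
rewrite (_ : p%:Z - j%:Z = p.+1%:Z - j.+1%:Z); last by rewrite !subzn.
rewrite (_ : (u + v + p.+1 + a - j = (u + v + p + a - j).+1)%N); last by lia.
rewrite (_ : (u + v + p.+1 + a - j.+1 = u + v + p + a - j)%N); last by lia.
rewrite !invqp_subnS (_ : (a + j.+1 = (a + j).+1)%N); last by lia.
rewrite (invqpS (a + j)) (invqpS j) qpochS.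
rewrite (_ : ((p + a).+1 = (p - j) + 1 + a + j)%N); last by lia.
rewrite (_ : (p.+1 = (p - j) + 1 + j)%N); last by lia.
rewrite (_ : ((u + p + a).+1 = (u - j) + (p - j) + 1 + a + j + j)%N); last by lia.
rewrite (_ : ((v + p + a).+1 = (v - j) + (p - j) + 1 + a + j + j)%N); last by lia.
rewrite (_ : ((u + v + p + a - j).+1 = (u - j) + (v - j) + (p - j) + 1 + a + j + j)%N);
  last by lia.
rewrite (_ : ((p - j) + 1 + j - j = (p - j) + 1)%N); last by lia.
rewrite (_ : ((p - j) + 1 + j - j.+1 = p - j)%N); last by lia.
rewrite (_ : (j.+1 * j.+1 + a * j.+1 = (j * j + a * j) + j + j + 1 + a)%N); last by lia.
rewrite (_ : ((a + j).+1 = a + j + 1)%N); last by lia.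
rewrite (_ : (j.+1 = j + 1)%N); last by lia.
rewrite !exprD !expr1; ring.
Qed.

Lemma saal_term_recurrence a u v p j : (j <= p.+1)%N ->
  saal_term q a u v p.+1 j * ((1 - q ^+ (p + a).+1) * (1 - q ^+ p.+1))
  - saal_term q a u v p j * ((1 - q ^+ (u + p + a).+1) * (1 - q ^+ (v + p + a).+1))
  = saal_cert q a u v p j.+1 - saal_cert q a u v p j.
Proof.
rewrite leq_eqVlt ltnS => /orP[/eqP ->|le_jp].
  rewrite /saal_cert !saal_term_succ_eq0 subnn expr0.
  by rewrite (_ : (a + p.+1 = (p + a).+1)%N); [ring | lia].
case: (boolP ((j <= u) && (j <= v))%N) => [/andP[le_ju le_jv]|out_j].
  exact: saal_term_recurrence_in.
have vanish p' j' : (j <= j')%N -> saal_term q a u v p' j' = 0.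
  by move=> le_jj'; apply: saal_term_eq0; move: out_j; rewrite negb_and -!ltnNge; lia.
by rewrite /saal_cert !vanish //; ring.
Qed.

Lemma qsaalschutz a u v p :
  \sum_(0 <= j < p.+1) saal_term q a u v p j =
  qpoch q (u + p + a) * qpoch q (v + p + a) * qpoch q (u + v + a) /
  (qpoch q (p + a) * qpoch q p * qpoch q (a + u) * qpoch q (a + v) * qpoch q u * qpoch q v).
Proof.
elim: p => [|p IHp].
  rewrite big_nat1 /saal_term !subr0 !addn0 !subn0 !add0n muln0 expr0 mul1r.
  rewrite !invqp_nat qpoch0 (addnC a u) (addnC a v).
  by field; rewrite !qpoch_neq0 oner_neq0.
set c1 := (1 - q ^+ (p + a).+1) * (1 - q ^+ p.+1).
set c0 := (1 - q ^+ (u + p + a).+1) * (1 - q ^+ (v + p + a).+1).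
have c1_neq0 : c1 != 0 by rewrite mulf_neq0 ?subr1X_neq0.
have step : (\sum_(0 <= j < p.+2) saal_term q a u v p.+1 j) * c1
          = (\sum_(0 <= j < p.+1) saal_term q a u v p j) * c0.
  have := @telescope_sumr_eq _ 0 p.+2 (saal_cert q a u v p)
    (fun j => saal_term q a u v p.+1 j * c1 - saal_term q a u v p j * c0) (leq0n _)
    (fun j le_jp => saal_term_recurrence a u v (proj2 (andP le_jp) : (j <= p.+1)%N)).
  rewrite /saal_cert saal_term_succ_eq0 expr0 subrr !(mulr0, mul0r) oppr0 subrr sumrB -!mulr_suml.
  move/eqP; rewrite subr_eq0 => /eqP ->.
  by rewrite big_nat_recr //= saal_term_succ_eq0 addr0.
apply: (mulIf c1_neq0); rewrite step IHp /c0 /c1.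
rewrite (_ : (u + p.+1 + a = (u + p + a).+1)%N); last by lia.
rewrite (_ : (v + p.+1 + a = (v + p + a).+1)%N); last by lia.
rewrite (_ : (p.+1 + a = (p + a).+1)%N); last by lia.
by rewrite !qpochS; field; rewrite !qpoch_neq0 !subr1X_neq0.
Qed.

Lemma qsaalschutz_widen a u v p N : (p <= N)%N ->
  \sum_(0 <= j < N.+1) saal_term q a u v p j =
  qpoch q (u + p + a) * qpoch q (v + p + a) * qpoch q (u + v + a) /
  (qpoch q (p + a) * qpoch q p * qpoch q (a + u) * qpoch q (a + v) * qpoch q u * qpoch q v).
Proof.
move=> le_pN; rewrite (@big_cat_nat _ _ _ p.+1) //= qsaalschutz big_nat_cond big1 ?addr0 //.
by move=> j /andP[/andP[lt_pj _] _]; apply: saal_term_eq0; rewrite lt_pj !orbT.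
Qed.

Lemma side_sum_double (s l m n u v N : nat) : (l <= N)%N ->
  invqp q (l + m + s)%N * invqp q (l + n + s)%N * invqp q u * invqp q v *
    \sum_(0 <= k < N.+1) side_term q s l m n u v k
  = qpoch q (l + s) * invqp q (l + m + s)%N * invqp q (l + n + s)%N
    * invqp q (l + u + s)%N * invqp q (l + v + s)%N *
    \sum_(0 <= k < N.+1) \sum_(0 <= j < N.+1) double_term q s l m n u v k j.
Proof.
move=> le_lN; rewrite !mulr_sumr; apply: eq_bigr => k _.
have [le_kl|lt_lk] := leqP k l; last first.
  rewrite /side_term (invqp_subn_lt0 q lt_lk) big1 ?(mulr0, mul0r) // => j _.
  rewrite /double_term -addrA -opprD -PoszD.
  by rewrite (@invqp_subn_lt0 _ q l (k + j)) ?(mulr0, mul0r) ?ltn_addr.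
under eq_bigr do rewrite double_term_saal_term //.
rewrite -mulr_sumr.
rewrite qsaalschutz_widen ?(leq_trans (leq_subr k l)) // /side_term (subzn le_kl) !invqp_nat.
rewrite (_ : (u + (l - k) + (k + s) = l + u + s)%N); last by lia.
rewrite (_ : (v + (l - k) + (k + s) = l + v + s)%N); last by lia.
rewrite (_ : (l - k + (k + s) = l + s)%N); last by lia.
rewrite (_ : (u + v + (k + s) = u + v + k + s)%N); last by lia.
rewrite (_ : (k + s + u = u + k + s)%N); last by lia.
rewrite (_ : (k + s + v = v + k + s)%N); last by lia.
by field; rewrite !qpoch_neq0.
Qed.

Lemma side_sum_transform (s l m n u v : nat) :
  invqp q (l + m + s)%N * invqp q (l + n + s)%N * invqp q u * invqp q v *
    \sum_(0 <= k < (l + m + n + u + v).+1) side_term q s l m n u v k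
  = invqp q (l + u + s)%N * invqp q (l + v + s)%N * invqp q m * invqp q n *
    \sum_(0 <= k < (l + m + n + u + v).+1) side_term q s l u v m n k.
Proof.
have le_lN : (l <= l + m + n + u + v)%N by lia.
rewrite !side_sum_double // exchange_big_nat.
under [in RHS]eq_bigr => k _ do under eq_bigr => j _ do rewrite double_term_swap.
ring.
Qed.

End QSaalschutz.

Theorem corollary5p7 (R : realType) (q : R[i]) (l m n u v : nat) :
  0 < `|q| -> `|q| < 1 ->
  (invqp q (l + m)%N%:Z * invqp q (l + n)%N%:Z * invqp q u%:Z * invqp q v%:Z *
    \sum_(0 <= k < (l + m + n + u + v).+1)
      q ^+ (k * k) * qpoch q (l + m + n - k)%N * qpoch q (u + v + k)%N *
      invqp q k%:Z * invqp q (l%:Z - k%:Z) * invqp q (m%:Z - k%:Z)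
      * invqp q (n%:Z - k%:Z) * invqp q (u + k)%N%:Z * invqp q (v + k)%N%:Z
   = invqp q (l + u)%N%:Z * invqp q (l + v)%N%:Z * invqp q m%:Z * invqp q n%:Z *
    \sum_(0 <= k < (l + m + n + u + v).+1)
      q ^+ (k * k) * qpoch q (l + u + v - k)%N * qpoch q (m + n + k)%N *
      invqp q k%:Z * invqp q (l%:Z - k%:Z) * invqp q (u%:Z - k%:Z)
      * invqp q (v%:Z - k%:Z) * invqp q (m + k)%N%:Z * invqp q (n + k)%N%:Z)
  /\
  (invqp q (l + m + 1)%N%:Z * invqp q (l + n + 1)%N%:Z * invqp q u%:Z * invqp q v%:Z *
    \sum_(0 <= k < (l + m + n + u + v).+1)
      q ^+ (k * k + k) * qpoch q (l + m + n - k + 1)%N * qpoch q (u + v + k + 1)%N *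
      invqp q k%:Z * invqp q (l%:Z - k%:Z) * invqp q (m%:Z - k%:Z)
      * invqp q (n%:Z - k%:Z) * invqp q (u + k + 1)%N%:Z * invqp q (v + k + 1)%N%:Z
   = invqp q (l + u + 1)%N%:Z * invqp q (l + v + 1)%N%:Z * invqp q m%:Z * invqp q n%:Z *
    \sum_(0 <= k < (l + m + n + u + v).+1)
      q ^+ (k * k + k) * qpoch q (l + u + v - k + 1)%N * qpoch q (m + n + k + 1)%N *
      invqp q k%:Z * invqp q (l%:Z - k%:Z) * invqp q (u%:Z - k%:Z)
      * invqp q (v%:Z - k%:Z) * invqp q (m + k + 1)%N%:Z * invqp q (n + k + 1)%N%:Z).
Proof.
move=> _ q_lt1; have q_not_root1 n := expr_neq1_norm_lt1 n q_lt1.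
split.
- rewrite (eq_bigr (side_term q 0 l m n u v)); last first.
    by move=> k _; rewrite /side_term mul0n !addn0.
  rewrite [in RHS](eq_bigr (side_term q 0 l u v m n)); last first.
    by move=> k _; rewrite /side_term mul0n !addn0.
  by have := side_sum_transform q_not_root1 0 l m n u v; rewrite !addn0.
- rewrite (eq_bigr (side_term q 1 l m n u v)); last first.
    by move=> k _; rewrite /side_term mul1n.
  rewrite [in RHS](eq_bigr (side_term q 1 l u v m n)); last first.
    by move=> k _; rewrite /side_term mul1n.
  exact: side_sum_transform.
Qed.
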